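(* Let $G$ be a graph, $H$ a hole of $G$, $P$ an induced path of $G$, and $u,v$ two nonadjacent vertices of $H$ not on $P$, such that (i) $v$ is adjacent to no vertex of $P$, and (ii) some internal vertex of one of the two $(u,v)$-sections of $H$ and some internal vertex of the other $(u,v)$-section of $H$ are each adjacent to a vertex of $P$. Then $G$ has a hole which does not contain $u$, contains both edges of $H$ incident to $v$, and contains a vertex of $P$ not lying on $H$.
   Context: All graphs are finite and simple. A hole of a graph is an induced cycle of length at least $4$. For two vertices $u,v$ of a cycle $H$, the two $(u,v)$-sections of $H$ are the two $u$–$v$ paths into which $H$ is divided by $u$ and $v$. *)

From mathcomp Require Import all_boot.
Set Implicit Arguments. Unset Strict Implicit. Unset Printing Implicit Defensive.

Definition simple_graph (T : finType) (e : rel T) : Prop :=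
  symmetric e /\ irreflexive e.

(* A cycle is represented by the uniq sequence of its vertices in cyclic
   order; [next c x] / [prev c x] are the cyclic neighbours (path.v). *)
Definition hole (T : finType) (e : rel T) (c : seq T) : Prop :=
  [/\ uniq c, 4 <= size c &
      forall x y, x \in c -> y \in c ->
        e x y = (y == next c x) || (x == next c y)].

Definition cycle_edge (T : eqType) (c : seq T) (x y : T) : bool :=
  (x \in c) && (y \in c) && ((y == next c x) || (x == next c y)).

Definition induced_path (T : finType) (e : rel T) (p : seq T) : Prop :=
  uniq p /\
  forall x y, x \in p -> y \in p ->
    e x y = (index y p == (index x p).+1) || (index x p == (index y p).+1).

(* Internal vertices of the (u,v)-section of c that goes from u to v in the
   cyclic order of c ([arc c u v] starts at u and stops just before v). The
   two (u,v)-sections have internal vertices [section_int c u v] and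
   [section_int c v u]. *)
Definition section_int (T : eqType) (c : seq T) (u v : T) : seq T :=
  behead (arc c u v).

From mathcomp Require Import all_boot zify.
Set Implicit Arguments. Unset Strict Implicit. Unset Printing Implicit Defensive.

(* Rotate H to read v, s1, u, s2, where s1 and s2 are the interiors of the two
   (u,v)-sections. In the subgraph induced on X = (V(H) \ {u, v}) ∪ V(P), the
   two H-neighbours n and p of v are joined by a walk: along s1 to a vertex with
   a neighbour on P, through P, and back along s2 to p. A shortest such walk is an
   induced path, and since v is adjacent to n and p but to no other vertex of X,
   adding v closes it into a hole through both H-edges at v and avoiding u. As s1
   and s2 are anticomplete, the path cannot stay inside V(H), so it uses a vertex
   of P outside H. *)

Lemma eq_nth_index (T : eqType) (x0 : T) s x i :
  uniq s -> x \in s -> i < size s -> (x == nth x0 s i) = (index x s == i).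
Proof.
move=> Us xs ltis; apply/eqP/eqP => [->|<-]; first exact: index_uniq.
by rewrite nth_index.
Qed.

Lemma eq_next_index (T : eqType) (c : seq T) x y :
  uniq c -> x \in c -> y \in c ->
  (y == next c x) = (index y c == if (index x c).+1 == size c then 0 else (index x c).+1).
Proof.
case: c => [//|y0 c] Uc xc yc; rewrite next_nth xc.
set i := index x _; have lt_i : i < size (y0 :: c) by rewrite index_mem.
case: ifP => [/eqP Ei | /negbT nEi].
  rewrite nth_default /=; last by move: lt_i Ei => /=; lia.
  by rewrite -[y0 in y == y0]/(nth y0 (y0 :: c) 0) eq_nth_index.
by rewrite -[nth y0 c i]/(nth y0 (y0 :: c) i.+1) eq_nth_index //; lia.
Qed.

Lemma prev_head (T : eqType) (v : T) s : v \notin s -> prev (v :: s) v = last v s.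
Proof. by move=> vs; rewrite prev_nth mem_head (memNindex vs) (last_nth v). Qed.

Lemma last_take (T : Type) (x : T) s i :
  i <= size s -> last x (take i s) = nth x (x :: s) i.
Proof.
move=> le_is; rewrite (last_nth x) size_takel //.
by rewrite -[x :: _]/(take i.+1 (x :: s)) nth_take.
Qed.

Lemma uniq_sections (T : eqType) (v u : T) s1 s2 :
  uniq (v :: s1 ++ u :: s2) ->
  [/\ v \notin s1 ++ s2, u \notin s1 ++ s2, v != u & {in s2, forall z, z \notin s1}].
Proof.
rewrite cons_uniq cat_uniq [has _ (u :: _)]/= !mem_cat inE !negb_or.
case/andP=> /and3P[vs1 vu vs2] /and3P[_ /andP[us1 /hasPn s12] /andP[us2 _]].
by split; rewrite ?negb_or ?vs1 ?vs2 ?us1 ?us2.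
Qed.

Lemma last_path_closed (T : eqType) (r : rel T) (S : {pred T}) x s :
  {in S & s, forall y z, r y z -> z \in S} -> x \in S -> path r x s -> last x s \in S.
Proof.
elim: s x => //= z s IH x closed xS /andP[rxz rs].
have zS : z \in S by apply: (closed x z) => //; exact: mem_head.
by apply: IH rs => // y w yS ws; apply: closed; rewrite ?inE ?ws ?orbT.
Qed.

Section Holes.

Variables (T : finType) (e : rel T).

Lemma hole_adjE c x y : hole e c -> x \in c -> y \in c ->
  e x y = (y == next c x) || (y == prev c x).
Proof.
case=> Uc _ adj xc yc; rewrite adj //; congr orb.
by rewrite -{1}(next_prev Uc x) (inj_eq (can_inj (prev_next Uc))) eq_sym.
Qed.

Lemma hole_cycle c : hole e c -> cycle e c.
Proof.
move=> hc; have [Uc _ _] := hc.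
apply: (sub_in_cycle _ (allss c) (cycle_next Uc)) => x _ xc _ /eqP <-.
by rewrite (hole_adjE hc) ?eqxx ?mem_next.
Qed.

Lemma hole_cycle_edge c x y :
  hole e c -> x \in c -> y \in c -> cycle_edge c x y = e x y.
Proof. by case=> _ _ adj xc yc; rewrite /cycle_edge xc yc adj. Qed.

Lemma hole_rot i c : hole e c -> hole e (rot i c).
Proof.
case=> Uc szc adj; split; rewrite ?rot_uniq ?size_rot // => x y.
by rewrite !mem_rot !next_rot //; apply: adj.
Qed.

Lemma hole_sections_nonadj v u s1 s2 :
  hole e (v :: s1 ++ u :: s2) -> {in s1 & s2, forall y z, ~~ e y z}.
Proof.
move=> hc y z ys1 zs2; have [Uc _ adj] := hc.
have [] := uniq_sections Uc; rewrite !mem_cat !negb_or.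
case/andP=> vs1 vs2 /andP[_ us2] _ /(_ z zs2) zs1.
have iy : index y (v :: s1 ++ u :: s2) = (index y s1).+1.
  by rewrite /= ifN ?index_cat ?ys1 //; apply: contraNneq vs1 => ->.
have iz : index z (v :: s1 ++ u :: s2) = (size s1 + (index z s2).+1).+1.
  rewrite /= ifN ?index_cat ?(negbTE zs1) /= ?ifN //.
    by apply: contraNneq us2 => ->.
  by apply: contraNneq vs2 => ->.
have := index_mem y s1; have := index_mem z s2; rewrite ys1 zs2.
have yc : y \in v :: s1 ++ u :: s2 by rewrite inE mem_cat ys1 orbT.
have zc : z \in v :: s1 ++ u :: s2 by rewrite inE mem_cat inE zs2 !orbT.
rewrite adj // !(eq_next_index Uc) // iy iz /= size_cat /=.
by case: ifP; case: ifP; lia.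
Qed.

End Holes.

Lemma induced_path_sorted (T : finType) (e : rel T) s : induced_path e s -> sorted e s.
Proof.
case: s => // x s [Us adj]; apply/(pathP x) => i lt_is.
rewrite -[nth x s i]/(nth x (x :: s) i.+1) adj ?mem_nth ?index_uniq //=; lia.
Qed.

Lemma eq_in_induced_path (T : finType) (e e' : rel T) s :
  {in s &, e =2 e'} -> induced_path e s -> induced_path e' s.
Proof. by move=> ee' [Us adj]; split=> // x y xs ys; rewrite -ee' // adj. Qed.

Lemma hole_cons_induced_path (T : finType) (e : rel T) v x s :
  symmetric e -> irreflexive e -> induced_path e (x :: s) -> v \notin x :: s ->
  x != last x s -> ~~ e x (last x s) ->
  {in x :: s, forall z, e v z = (z == x) || (z == last x s)} ->
  hole e [:: v, x & s].
Proof.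
move=> e_sym e_irr [Ul adj] vl x_last nadj_last ev.
have il : index (last x s) (x :: s) = size s by rewrite (last_nth x) index_uniq.
have s_gt1 : 1 < size s.
  case: (eqVneq (size s) 0) => [s0 | s_gt0].
    by move: x_last; rewrite (last_nth x) s0 eqxx.
  by move: nadj_last; rewrite adj ?mem_head ?mem_last // il index_head; lia.
set l := x :: s in Ul adj vl ev il *.
have {}ev z : z \in l -> e v z = (index z l == 0) || (index z l == size s).
  move=> zl; rewrite ev // -(eq_nth_index x Ul zl) //.
  by rewrite -(eq_nth_index x Ul zl) ?(last_nth x) //; rewrite /l /=; lia.
have Uvl : uniq (v :: l) by rewrite cons_uniq vl.
have iv : index v (v :: l) = 0 := index_head v l.
have il' y : y \in l -> index y (v :: l) = (index y l).+1.
  by move=> yl; rewrite /= ifN //; apply: contraNneq vl => ->.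
have ltl y : y \in l -> index y l <= size s by rewrite -ltnS -index_mem.
have size_l : size l = (size s).+1 by [].
split => //; rewrite -/l; clearbody l.
move=> y z yvl zvl; rewrite !(eq_next_index Uvl) // [size _]/= size_l.
case/predU1P: yvl => [-> | yl]; case/predU1P: zvl => [-> | zl].
- by rewrite e_irr iv /=; lia.
- by rewrite ev // iv il' //=; have := ltl z zl; case: ifP; lia.
- by rewrite e_sym ev // iv il' //=; have := ltl y yl; case: ifP; lia.
rewrite adj // !il' //=; have := ltl y yl; have := ltl z zl.
by case: ifP; case: ifP; lia.
Qed.

Section Walks.

Variables (T : finType) (r : rel T).
Hypotheses (r_sym : symmetric r) (r_irr : irreflexive r).

Definition chordless x s :=
  forall i j, i.+1 < j <= size s -> ~~ r (nth x (x :: s) i) (nth x (x :: s) j).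

Lemma path_shortcut x s i j : path r x s -> i.+1 < j <= size s ->
  r (nth x (x :: s) i) (nth x (x :: s) j) ->
  exists s', [/\ path r x s', last x s' = last x s & size s' < size s].
Proof.
case: j => // j rs /andP[lt_ij lt_js] r_ij; exists (take i s ++ drop j s).
have le_is : i <= size s by lia.
split.
- rewrite cat_path take_path //= last_take // (drop_nth x) //= r_ij /=.
  by move: rs; rewrite -{1}(cat_take_drop j.+1 s) cat_path last_take // => /andP[].
- by rewrite -[in RHS](cat_take_drop j s) !last_cat (drop_nth x).
- by rewrite size_cat size_takel // size_drop; lia.
Qed.

Section Chordless.

Variables (x : T) (s : seq T).
Hypotheses (xs_path : path r x s) (xs_chordless : chordless x s).

Lemma chordless_adj i j : i <= size s -> j <= size s ->
  r (nth x (x :: s) i) (nth x (x :: s) j) = (j == i.+1) || (i == j.+1).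
Proof.
wlog le_ij : i j / i <= j.
  move=> wlog_adj le_is le_js; case: (leqP i j) => [|/ltnW] le_ji.
    exact: wlog_adj.
  by rewrite r_sym orbC wlog_adj.
move=> _ le_js; case: (ltngtP i.+1 j) => [lt_ij | lt_ji | eq_ij].
- by rewrite (negbTE (xs_chordless _)) ?lt_ij ?le_js //; lia.
- have -> : j = i by lia.
  by rewrite r_irr; lia.
- by rewrite -eq_ij orTb; move/(pathP x): xs_path; apply; lia.
Qed.

Lemma chordless_uniq : x != last x s -> uniq (x :: s).
Proof.
move=> x_last.
suff no_rep i j : i < j <= size s -> nth x (x :: s) i != nth x (x :: s) j.
  apply/(uniqP x) => i j; rewrite !inE /= !ltnS => le_is le_js eq_ij.
  case: (ltngtP i j) => // [lt_ij | lt_ji].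
    by move: (no_rep i j); rewrite lt_ij le_js eq_ij eqxx => /(_ isT).
  by move: (no_rep j i); rewrite lt_ji le_is eq_ij eqxx => /(_ isT).
move=> /andP[lt_ij le_js]; apply/eqP => eq_ij.
have same_nbrs k : k <= size s ->
    ((i == k.+1) || (k == i.+1)) = ((j == k.+1) || (k == j.+1)).
  by move=> le_ks; rewrite -!chordless_adj ?eq_ij //; lia.
have := same_nbrs i.+1; case: (ltnP j (size s)) => [lt_js | ge_js].
  by have := same_nbrs j.+1; lia.
case: i => [|i] in lt_ij eq_ij same_nbrs *.
  have js : j = size s by lia.
  by move: x_last; rewrite (last_nth x) -js -eq_ij /= eqxx.
by have := same_nbrs i; lia.
Qed.

Lemma chordless_induced_path : x != last x s -> induced_path r (x :: s).
Proof.
move=> x_last; split=> [|y z yxs zxs]; first exact: chordless_uniq.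
have := index_mem y (x :: s); have := index_mem z (x :: s); rewrite yxs zxs !ltnS.
by move=> ? ?; rewrite -{1}(nth_index x yxs) -{1}(nth_index x zxs) chordless_adj.
Qed.

End Chordless.

(* Strong induction on the length of a walk from [x] to [y]: a chord shortens it. *)
Lemma connect_induced_path x y : connect r x y -> x != y ->
  exists s, [/\ path r x s, last x s = y & induced_path r (x :: s)].
Proof.
case/connectP=> s0 rs0 ->.
elim: {s0}(size s0).+1 {-2}s0 (ltnSn (size s0)) rs0 => // n IH s lt_sn rs x_last.
pose chord (ij : 'I_(size s).+1 * 'I_(size s).+1) :=
  (ij.1.+1 < ij.2) && r (nth x (x :: s) ij.1) (nth x (x :: s) ij.2).
have [[i j] /andP[/= lt_ij r_ij] | no_chord] := pickP chord.
  have ij_s : i.+1 < j <= size s by rewrite lt_ij /= -ltnS.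
  have [s' [rs' eq_last lt_s's]] := path_shortcut rs ij_s r_ij.
  by rewrite -eq_last in x_last *; apply: IH => //; lia.
exists s; split=> //; apply: chordless_induced_path => // i j /andP[lt_ij le_js].
have lt_i : i < (size s).+1 by lia.
have lt_j : j < (size s).+1 by lia.
by move: (no_chord (Ordinal lt_i, Ordinal lt_j)); rewrite /chord /= lt_ij => /negbT.
Qed.

Lemma sorted_connect s : sorted r s -> {in s &, forall y z, connect r y z}.
Proof.
case: s => // x s rs y z ys zs; have r_conn := path_connect rs.
by rewrite (connect_trans _ (r_conn z zs)) // (sym_connect_sym r_sym) r_conn.
Qed.

End Walks.

Section HoleThroughPath.

Variables (T : finType) (e : rel T) (v u : T) (s1 s2 P : seq T) (a b x y : T).
Local Notation c := (v :: s1 ++ u :: s2).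
Hypotheses (e_sym : symmetric e) (e_irr : irreflexive e).
Hypotheses (hole_c : hole e c) (P_induced : induced_path e P).
Hypotheses (uP : u \notin P) (vP : v \notin P) (vNP : {in P, forall z, ~~ e v z}).
Hypotheses (a_s2 : a \in s2) (b_s1 : b \in s1) (x_P : x \in P) (y_P : y \in P).
Hypotheses (e_ax : e a x) (e_by : e b y).

(* [c] is H rotated to start at [v]; [eX] is the subgraph of [e] induced on X. *)
Let inX z := (z \in s1 ++ s2) || (z \in P).
Let eX : rel T := [rel z w | [&& inX z, inX w & e z w]].

Lemma eX_sym : symmetric eX.
Proof. by move=> z w; rewrite /eX /= e_sym; case: (inX z); case: (inX w). Qed.

Lemma eX_irr : irreflexive eX.
Proof. by move=> z; rewrite /eX /= e_irr !andbF. Qed.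

Lemma next_mem_s1 : next c v \in s1.
Proof. by case: s1 b_s1 => // z t _; rewrite /= eqxx mem_head. Qed.

Lemma prev_mem_s2 : prev c v \in s2.
Proof.
have [Uc _ _] := hole_c; move: Uc; rewrite cons_uniq => /andP[vc _].
rewrite prev_head // last_cat /=.
by case: s2 a_s2 => // z t _ /=; exact: mem_last.
Qed.

Lemma inX_neq z : inX z -> (z != u) && (z != v).
Proof.
have [Uc _ _] := hole_c; have [vs us _ _] := uniq_sections Uc.
case/orP=> [zs | zP]; apply/andP; split.
- by apply: contraNneq us => <-.
- by apply: contraNneq vs => <-.
- by apply: contraNneq uP => <-.
- by apply: contraNneq vP => <-.
Qed.

Lemma v_adjE z : inX z -> e v z = (z == next c v) || (z == prev c v).
Proof.
have e_vc w : w \in c -> e v w = (w == next c v) || (w == prev c v).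
  by move=> wc; rewrite (hole_adjE hole_c) ?mem_head.
case/orP=> [zs | zP].
  by apply: e_vc; move: zs; rewrite inE !mem_cat inE => /orP[] ->; rewrite ?orbT.
have [e_vn e_vp] : e v (next c v) /\ e v (prev c v).
  by rewrite !e_vc ?eqxx ?orbT ?mem_next ?mem_prev ?mem_head.
rewrite (negbTE (vNP zP)); apply/esym/norP.
by split; apply: contraNneq (vNP zP) => ->.
Qed.

Lemma sections_connected : connect eX (next c v) (prev c v).
Proof.
have eX_inX z t : z \in inX -> t \in inX -> e z t -> eX z t.
  by move=> zX tX ezt; apply/and3P.
have conn w : sorted e w -> all inX w -> {in w &, forall z t, connect eX z t}.
  by move=> ew Xw; apply: (sorted_connect eX_sym); apply: sub_in_sorted Xw ew.
have [s1_sorted s2_sorted] : sorted e s1 /\ sorted e s2.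
  move: (hole_cycle hole_c); rewrite /= rcons_cat cat_path /= rcons_path.
  by case/and3P=> /path_sorted -> _ /andP[/path_sorted ->].
have X_s1 : all inX s1 by apply/allP => z zs; rewrite /inX mem_cat zs.
have X_s2 : all inX s2 by apply/allP => z zs; rewrite /inX mem_cat zs orbT.
have X_P : all inX P by apply/allP => z zP; rewrite /inX zP orbT.
apply: connect_trans (conn _ s1_sorted X_s1 _ _ next_mem_s1 b_s1) _.
apply: connect_trans (connect1 (eX_inX b y _ _ e_by)) _;
  [exact: (allP X_s1) | exact: (allP X_P) |].
apply: connect_trans (conn _ (induced_path_sorted P_induced) X_P _ _ y_P x_P) _.
apply: connect_trans (connect1 (eX_inX x a _ _ _)) _;
  [exact: (allP X_P) | exact: (allP X_s2) | by rewrite e_sym |].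
exact: conn _ s2_sorted X_s2 _ _ a_s2 prev_mem_s2.
Qed.

Lemma path_eX_all q : path eX (next c v) q -> all inX (next c v :: q).
Proof.
have nX : inX (next c v) by rewrite /inX mem_cat next_mem_s1.
elim: q (next c v) nX => [|w q IH] z zX /=; first by rewrite zX.
by case/andP=> /and3P[_ wX _] /(IH w wX); rewrite zX.
Qed.

Lemma path_eX_last_s1 q : path eX (next c v) q ->
  {in next c v :: q, forall z, z \in P -> z \in c} -> last (next c v) q \in s1.
Proof.
move=> q_path P_c; have X_q := allP (path_eX_all q_path).
have q_s z : z \in next c v :: q -> z \in s1 ++ s2.
  move=> zq; have /orP[// | zP] := X_q z zq.
  have /andP[zu zv] := inX_neq (X_q z zq); move: (P_c z zq zP).
  by rewrite inE !mem_cat inE (negbTE zu) (negbTE zv).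
have q_e : path e (next c v) q by apply: sub_path q_path => z w /and3P[].
apply: last_path_closed next_mem_s1 q_e => z w zs1 wq ezw.
have /orP[// | ws2] : (w \in s1) || (w \in s2).
  by rewrite -mem_cat q_s // inE wq orbT.
by move: (hole_sections_nonadj hole_c zs1 ws2); rewrite ezw.
Qed.

Lemma hole_through_path :
  exists H, [/\ hole e H, u \notin H, cycle_edge H v (next c v),
    cycle_edge H v (prev c v) & exists z, [/\ z \in P, z \notin c & z \in H]].
Proof.
have [Uc _ _] := hole_c; have [_ _ vu s12] := uniq_sections Uc.
have n_s1 := next_mem_s1; have p_s2 := prev_mem_s2.
have n_neq_p : next c v != prev c v by apply: contraNneq (s12 _ p_s2) => <-.
have [q [q_path q_last q_induced]] :=
  connect_induced_path eX_sym eX_irr sections_connected n_neq_p.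
have X_Q := allP (path_eX_all q_path).
have Q_neq z : z \in next c v :: q -> (z != u) && (z != v).
  by move=> zQ; apply/inX_neq/X_Q.
have hole_vQ : hole e [:: v, next c v & q].
  apply: hole_cons_induced_path; rewrite ?q_last //.
  - apply: eq_in_induced_path q_induced => z w zQ wQ.
    by rewrite /eX /= X_Q ?X_Q.
  - by apply/negP => /Q_neq; rewrite eqxx andbF.
  - exact: hole_sections_nonadj hole_c _ _ n_s1 p_s2.
  - by move=> z zQ; apply/v_adjE/X_Q.
have p_Q : prev c v \in next c v :: q by rewrite -q_last mem_last.
exists [:: v, next c v & q]; split=> //.
- by rewrite inE eq_sym negb_or vu /=; apply/negP => /Q_neq; rewrite eqxx.
- rewrite (hole_cycle_edge hole_vQ) ?mem_head ?inE ?eqxx ?orbT //.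
  by rewrite v_adjE ?eqxx // X_Q ?mem_head.
- rewrite (hole_cycle_edge hole_vQ) ?mem_head //; last by rewrite inE p_Q orbT.
  by rewrite v_adjE ?eqxx ?orbT // X_Q.
have [/hasP[z zQ /andP[zP zc]] | /hasPn Q_c] :=
  boolP (has [pred z | (z \in P) && (z \notin c)] (next c v :: q)).
  by exists z; split => //; rewrite inE zQ orbT.
have := path_eX_last_s1 q_path; rewrite q_last => p_s1.
have /negP[] := s12 _ p_s2; apply: p_s1 => z zQ zP.
by move: (Q_c z zQ); rewrite /= zP negbK.
Qed.

End HoleThroughPath.

Theorem lemma2p2 (T : finType) (e : rel T) (H P : seq T) (u v : T) :
  simple_graph e ->
  hole e H ->
  induced_path e P ->
  u \in H -> v \in H -> u != v -> ~~ e u v ->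
  u \notin P -> v \notin P ->
  (forall x, x \in P -> ~~ e v x) ->
  (exists a b x y,
      [/\ a \in section_int H u v, b \in section_int H v u,
          x \in P, y \in P & e a x && e b y]) ->
  exists H' : seq T,
    [/\ hole e H', u \notin H',
        cycle_edge H' v (next H v), cycle_edge H' v (prev H v) &
        exists z, [/\ z \in P, z \notin H & z \in H']].
Proof.
move=> [e_sym e_irr] hole_H P_induced uH vH uv _ uP vP vNP.
case=> a [b [x [y [a_sec b_sec xP yP /andP[e_ax e_by]]]]].
have [UH _ _] := hole_H; have vu : v != u by rewrite eq_sym.
have [i s1 s2 arc_vu arc_uv rotE] := rot_to_arc UH vH uH vu.
have a_s2 : a \in s2 by move: a_sec; rewrite /section_int -arc_uv.
have b_s1 : b \in s1 by move: b_sec; rewrite /section_int -arc_vu.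
have hole_rot_H : hole e (v :: s1 ++ u :: s2) by rewrite -rotE; apply: hole_rot.
have [H' [hole_H' uH' vn vp [z [zP zH zH']]]] :=
  hole_through_path e_sym e_irr hole_rot_H P_induced uP vP vNP a_s2 b_s1 xP yP e_ax e_by.
move: vn vp zH; rewrite -rotE next_rot // prev_rot // mem_rot => vn vp zH.
by exists H'; split=> //; exists z.
Qed.
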